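(* Let $r\ge2$ be even. For any $n\ge r$, $A>0$ and $\lambda\in[0,1]$, there exists $f\in C^r[-1,1]$, nonnegative on $[-1,1]$ and identically $0$ on $[-1,-1/2]$, such that every algebraic polynomial $P_n$ of degree $\le n$ which is nonnegative on $(\lambda-1/n,\lambda)$ and satisfies $P_n^{(i)}(\lambda)=f^{(i)}(\lambda)$ for $0\le i\le r$ obeys $$\|f-P_n\|>A\,\|f^{(r)}\|.$$
   Context: $\|\cdot\|$ is the sup norm on $[-1,1]$. *)

From Stdlib Require Import Reals.
From Coquelicot Require Import Coquelicot.
Open Scope R_scope.

Definition sup_norm (g : R -> R) : Rbar :=
  Lub_Rbar (fun y => exists x, -1 <= x <= 1 /\ y = Rabs (g x)).

Definition is_Cr (r : nat) (f : R -> R) : Prop :=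
  (forall k x, (k <= r)%nat -> ex_derive_n f k x) /\
  (forall x, continuous (Derive_n f r) x).

Definition poly_eval (c : nat -> R) (n : nat) (x : R) : R :=
  sum_f_R0 (fun k => c k * x ^ k) n.

From Stdlib Require Import Reals Lra Lia Psatz Factorial.
From Coquelicot Require Import Coquelicot.
Open Scope R_scope.

(* Take f = S / eps, where S is a spline of degree r + 1 with three knots whose
   r-th derivative is (r+1)! times a hat function of height eps, so that
   ||f^(r)|| <= (r+1)!.  If ||f - P|| <= A (r+1)!, then |P| <= A (r+1)! on
   [-1, -1/2], where f vanishes, and since P has degree n this bounds P^(r+1) on
   [-1, 1] by C A (r+1)! with C depending only on n.  As P matches f to order r
   at lam and r + 1 is odd, Taylor's formula at lam - 4 eps, a point of
   (lam - 1/n, lam) where f^(r+1) = -(r+1)!/(7 eps), gives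
   P(lam - 4 eps) <= f(lam - 4 eps) - (4 eps)^(r+1)/(7 eps) + (4 eps)^(r+1) C A,
   which is negative for eps small with respect to 1/(C A). *)

Definition smooth (g : R -> R) : Prop := forall k x, ex_derive_n g k x.

Lemma poly_eval_sum_n (c : nat -> R) (n : nat) (x : R) :
  poly_eval c n x = sum_n (fun k => c k * x ^ k) n.
Proof. unfold poly_eval. now rewrite sum_n_Reals. Qed.

Lemma smooth_poly_eval (c : nat -> R) (n : nat) : smooth (poly_eval c n).
Proof.
  intros k x.
  apply (ex_derive_n_ext (fun x => sum_n (fun j => c j * x ^ j) n)).
  { intro t. now rewrite poly_eval_sum_n. }
  apply (ex_derive_n_sum_n n (fun j x => c j * x ^ j)), filter_forall.
  intros t j m _ _. apply ex_derive_n_scal_l, ex_derive_n_pow.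
Qed.

Lemma Derive_n_poly_eval_gt (c : nat -> R) (n k : nat) (x : R) :
  (n < k)%nat -> Derive_n (poly_eval c n) k x = 0.
Proof.
  intro Hnk.
  rewrite (Derive_n_ext _ (fun x => sum_n (fun j => c j * x ^ j) n))
    by (intro t; apply poly_eval_sum_n).
  rewrite (Derive_n_sum_n n (fun j x => c j * x ^ j)).
  2: { apply filter_forall. intros t j m _ _. apply ex_derive_n_scal_l, ex_derive_n_pow. }
  rewrite sum_n_Reals. apply sum_eq_R0. intros j Hj.
  rewrite Derive_n_scal_l, Derive_n_pow_bigi by lia. ring.
Qed.

Lemma MVT_Derive (h : R -> R) (a b : R) : (forall x, ex_derive h x) ->
  exists eta, Rmin a b <= eta <= Rmax a b /\ h b - h a = Derive h eta * (b - a).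
Proof.
  intro Hh. apply (MVT_gen h a b (Derive h)).
  - intros x _. apply Derive_correct, Hh.
  - intros x _. apply derivable_continuous_pt, ex_derive_Reals_0, Hh.
Qed.

(* Split [u, v] into thirds: the outer thirds give two points where the k-th
   derivative is small, and the mean value theorem between them a point where
   the (k+1)-th one is. *)
Lemma exists_small_Derive_n (k : nat) : exists c, 0 < c /\
  forall (g : R -> R) (M u v : R), smooth g -> u < v ->
  (forall x, u <= x <= v -> Rabs (g x) <= M) ->
  exists xi, u <= xi <= v /\ Rabs (Derive_n g k xi) * (v - u) ^ k <= c * M.
Proof.
  induction k as [|k [c [Hc IH]]].
  { exists 1. split; [lra|]. intros g M u v _ Huv Hg.
    exists u. split; [lra|]. simpl. rewrite Rmult_1_r, Rmult_1_l. apply Hg; lra. }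
  exists (2 * 3 ^ S k * c). split.
  { assert (0 < 3 ^ S k) by (apply pow_lt; lra). nra. }
  intros g M u v Hs Huv Hg.
  set (l := (v - u) / 3).
  assert (Hl : 0 < l) by (unfold l; lra).
  assert (Hl3 : v - u = 3 * l) by (unfold l; field).
  destruct (IH g M u (u + l) Hs) as [x1 [Hx1 B1]]; [lra| intros x Hx; apply Hg; split; lra|].
  destruct (IH g M (v - l) v Hs) as [x2 [Hx2 B2]]; [lra| intros x Hx; apply Hg; split; lra|].
  replace (u + l - u) with l in B1 by ring.
  replace (v - (v - l)) with l in B2 by ring.
  destruct (MVT_Derive (Derive_n g k) x1 x2 (Hs (S k))) as [eta [Heta Hmvt]].
  rewrite Rmin_left, Rmax_right in Heta by lra.
  exists eta. split; [lra|].
  change (Derive_n g (S k) eta) with (Derive (Derive_n g k) eta).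
  set (D := Derive (Derive_n g k) eta) in *.
  assert (Hlk : 0 < l ^ k) by (apply pow_lt; lra).
  assert (Hdiff : Rabs D * (x2 - x1) <= Rabs (Derive_n g k x2) + Rabs (Derive_n g k x1)).
  { rewrite <- (Rabs_pos_eq (x2 - x1)), <- Rabs_mult, <- Hmvt by lra.
    eapply Rle_trans; [apply Rabs_triang|]. rewrite Rabs_Ropp. lra. }
  assert (Hstep : Rabs D * l * l ^ k <= 2 * c * M).
  { assert (Rabs D * l <= Rabs D * (x2 - x1)) by (apply Rmult_le_compat_l; [apply Rabs_pos|lra]).
    nra. }
  rewrite Hl3, Rpow_mult_distr.
  assert (0 < 3 ^ S k) by (apply pow_lt; lra).
  replace (Rabs D * (3 ^ S k * (l ^ S k))) with (3 ^ S k * (Rabs D * l * l ^ k)) by (simpl; ring).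
  nra.
Qed.

(* Downward induction on k: [exists_small_Derive_n] bounds g^(k) at one point of
   [u, v], and the mean value theorem with the bound on g^(k+1) spreads this to
   [lo, hi]. *)
Lemma Derive_n_bound_of_vanishing (m k : nat) (lo u v hi : R) :
  (k <= m)%nat -> lo <= u -> u < v -> v <= hi ->
  exists D, 0 <= D /\ forall (g : R -> R) (M : R), smooth g ->
  (forall x, Derive_n g m x = 0) ->
  (forall x, u <= x <= v -> Rabs (g x) <= M) ->
  forall x, lo <= x <= hi -> Rabs (Derive_n g k x) <= D * M.
Proof.
  intros Hkm Hlo Huv Hhi.
  replace k with (m - (m - k))%nat by lia.
  generalize (m - k)%nat (Nat.le_sub_l m k); clear k Hkm.
  intros j Hj; induction j as [|j IH].
  { exists 0. split; [lra|]. intros g M _ Hm _ x _.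
    rewrite Nat.sub_0_r, Hm, Rabs_R0. lra. }
  destruct (IH ltac:(lia)) as [D [HD HDbound]].
  destruct (exists_small_Derive_n (m - S j)) as [c [Hc Hsmall]].
  set (w := (v - u) ^ (m - S j)).
  assert (Hw : 0 < w) by (apply pow_lt; lra).
  exists (c / w + (hi - lo) * D). split.
  { assert (0 <= c / w) by (apply Rlt_le, Rdiv_lt_0_compat; lra). nra. }
  intros g M Hs Hm Hg x Hx.
  assert (HM : 0 <= M) by (eapply Rle_trans; [apply Rabs_pos| apply (Hg u); lra]).
  destruct (Hsmall g M u v Hs Huv Hg) as [xi [Hxi Bxi]]. fold w in Bxi.
  assert (Bxi' : Rabs (Derive_n g (m - S j) xi) <= c / w * M).
  { apply (Rmult_le_reg_r w); [lra|].
    replace (c / w * M * w) with (c * M) by (field; lra). exact Bxi. }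
  destruct (MVT_Derive (Derive_n g (m - S j)) xi x (Hs (S (m - S j)))) as [eta [Heta Hmvt]].
  assert (Heta' : lo <= eta <= hi).
  { split; [eapply Rle_trans; [|apply Heta]; apply Rmin_glb; lra
           | eapply Rle_trans; [apply Heta|]; apply Rmax_lub; lra]. }
  assert (Bder : Rabs (Derive (Derive_n g (m - S j)) eta) <= D * M).
  { replace (Derive (Derive_n g (m - S j)) eta) with (Derive_n g (m - j) eta)
      by (replace (m - j)%nat with (S (m - S j)) by lia; reflexivity).
    now apply HDbound. }
  assert (Hdx : Rabs (x - xi) <= hi - lo) by (apply Rabs_le; lra).
  assert (Rabs (Derive_n g (m - S j) x - Derive_n g (m - S j) xi) <= D * M * (hi - lo)).
  { rewrite Hmvt, Rabs_mult. apply Rmult_le_compat; auto using Rabs_pos. }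
  pose proof (Rabs_triang_inv (Derive_n g (m - S j) x) (Derive_n g (m - S j) xi)).
  nra.
Qed.

Lemma poly_Derive_n_bound (n k : nat) : (k <= S n)%nat -> exists C, 0 <= C /\
  forall (c : nat -> R) (M : R),
  (forall x, -1 <= x <= -1/2 -> Rabs (poly_eval c n x) <= M) ->
  forall x, -1 <= x <= 1 -> Rabs (Derive_n (poly_eval c n) k x) <= C * M.
Proof.
  intro Hk.
  destruct (Derive_n_bound_of_vanishing (S n) k (-1) (-1) (-1/2) 1) as [C [HC HCbound]];
    try lra; try lia.
  exists C. split; [exact HC|]. intros c M Hc.
  apply HCbound; [apply smooth_poly_eval | |exact Hc].
  intro x. apply Derive_n_poly_eval_gt. lia.
Qed.

Lemma locally_ex_derive_n_le (f : R -> R) (m n : nat) (x : R) : (m <= n)%nat ->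
  locally x (fun s => forall k, (k <= n)%nat -> ex_derive_n f k s) ->
  locally x (fun s => forall k, (k <= m)%nat -> ex_derive_n f k s).
Proof. intro Hmn. apply filter_imp. intros s Hs k Hk. apply Hs. lia. Qed.

Lemma locally_ex_derive_n_minus (f g : R -> R) (n : nat) (x : R) :
  locally x (fun s => forall k, (k <= n)%nat -> ex_derive_n f k s) ->
  locally x (fun s => forall k, (k <= n)%nat -> ex_derive_n g k s) ->
  locally x (fun s => forall k, (k <= n)%nat -> ex_derive_n (fun t => f t - g t) k s).
Proof.
  intros Hf Hg.
  generalize (filter_and _ _ (locally_locally _ _ Hf) (locally_locally _ _ Hg)).
  apply filter_imp. intros s [Hfs Hgs] k Hk.
  apply ex_derive_n_minus; eapply locally_ex_derive_n_le; eassumption.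
Qed.

(* [Taylor_Lagrange] only expands around the left end point, hence the
   reflection s |-> h (- s). *)
Lemma Taylor_flat_left (h : R -> R) (n : nat) (x y : R) : x < y ->
  (forall t, x <= t <= y ->
     locally t (fun s => forall k, (k <= S n)%nat -> ex_derive_n h k s)) ->
  (forall k, (k <= n)%nat -> Derive_n h k y = 0) ->
  exists z, x < z < y /\ h x = (x - y) ^ S n / INR (fact (S n)) * Derive_n h (S n) z.
Proof.
  intros Hxy Hloc Hflat.
  assert (Hopp : forall t k, x <= t <= y -> (k <= S n)%nat ->
            Derive_n (fun s => h (- s)) k (- t) = (-1) ^ k * Derive_n h k t).
  { intros t k Ht Hk. rewrite Derive_n_comp_opp, Ropp_involutive; [reflexivity|].
    rewrite Ropp_involutive. exact (locally_ex_derive_n_le h k (S n) t Hk (Hloc t Ht)). }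
  destruct (Taylor_Lagrange (fun s => h (- s)) n (- y) (- x)) as [z [Hz Htaylor]]; [lra|..].
  { intros t Ht k Hk. apply ex_derive_n_comp_opp.
    apply (locally_ex_derive_n_le h k (S n)); [exact Hk|apply Hloc; lra]. }
  exists (- z). split; [lra|].
  rewrite Ropp_involutive in Htaylor. rewrite Htaylor, sum_eq_R0.
  - rewrite <- (Ropp_involutive z) at 1. rewrite Hopp; [|lra|lia].
    replace (x - y) with (-1 * (- x - - y)) by ring.
    rewrite Rpow_mult_distr. field. apply INR_fact_neq_0.
  - intros k Hk. rewrite Hopp, Hflat; [ring|lia|lra|lia].
Qed.

Definition trunc_pow (a : R) (j : nat) (x : R) : R := Rmax (x - a) 0 ^ j.

Lemma trunc_pow_le (a : R) (j : nat) (x : R) : x <= a -> trunc_pow a (S j) x = 0.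
Proof. intro H. unfold trunc_pow. rewrite Rmax_right by lra. simpl. ring. Qed.

Lemma trunc_pow_ge (a : R) (j : nat) (x : R) : a <= x -> trunc_pow a j x = (x - a) ^ j.
Proof. intro H. unfold trunc_pow. now rewrite Rmax_left by lra. Qed.

Lemma continuous_trunc_pow (a : R) (j : nat) (x : R) : continuous (trunc_pow a j) x.
Proof.
  apply continuity_pt_filterlim.
  apply continuity_pt_ext with (f := fun t => ((t - a + Rabs (t - a)) / 2) ^ j).
  { intro t. unfold trunc_pow, Rmax, Rabs. f_equal. destruct Rle_dec, Rcase_abs; lra. }
  reg.
Qed.

Lemma is_derive_0_of_sq_bound (f : R -> R) (x : R) :
  (forall h, Rabs h <= 1 -> Rabs (f (x + h) - f x) <= h ^ 2) -> is_derive f x 0.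
Proof.
  intro Hsq. apply is_derive_Reals. intros e He.
  exists (mkposreal (Rmin e 1) (Rmin_pos _ _ He Rlt_0_1)). simpl.
  intros h Hh0 Hh.
  assert (Hh1 : Rabs h <= 1) by (pose proof (Rmin_r e 1); lra).
  assert (Hhe : Rabs h < e) by (pose proof (Rmin_l e 1); lra).
  assert (Habs : 0 < Rabs h) by (apply Rabs_pos_lt, Hh0).
  rewrite Rminus_0_r, Rabs_div by exact Hh0.
  apply (Rmult_lt_reg_r (Rabs h)); [exact Habs|].
  unfold Rdiv. rewrite Rmult_assoc, Rinv_l, Rmult_1_r by lra.
  eapply Rle_lt_trans; [apply Hsq, Hh1|].
  rewrite <- pow2_abs. nra.
Qed.

Lemma is_derive_trunc_pow (a : R) (j : nat) (x : R) :
  is_derive (trunc_pow a (S (S j))) x (INR (S (S j)) * trunc_pow a (S j) x).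
Proof.
  destruct (Rtotal_order x a) as [Hlt|[->|Hgt]].
  - rewrite trunc_pow_le, Rmult_0_r by lra.
    apply (is_derive_ext_loc (fun _ => 0)); [|auto_derive; auto].
    apply (filter_imp (fun t => t < a)); [|exact (open_lt a x Hlt)].
    intros t Ht. rewrite trunc_pow_le by lra. reflexivity.
  - rewrite trunc_pow_le, Rmult_0_r by lra.
    apply is_derive_0_of_sq_bound. intros h Hh.
    rewrite (trunc_pow_le a (S j) a), Rminus_0_r by lra.
    unfold trunc_pow. replace (a + h - a) with h by ring.
    assert (Hm : Rabs (Rmax h 0) <= Rabs h).
    { unfold Rmax. destruct Rle_dec; rewrite ?Rabs_R0; auto using Rabs_pos; lra. }
    rewrite <- RPow_abs. change (S (S j)) with (2 + j)%nat. rewrite pow_add.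
    assert (Rabs (Rmax h 0) ^ 2 <= h ^ 2).
    { rewrite <- (pow2_abs h). apply pow_incr. split; [apply Rabs_pos|exact Hm]. }
    assert (0 <= Rabs (Rmax h 0) ^ j <= 1).
    { split; [apply pow_le, Rabs_pos|]. rewrite <- (pow1 j).
      apply pow_incr. split; [apply Rabs_pos|lra]. }
    assert (0 <= Rabs (Rmax h 0) ^ 2) by apply pow2_ge_0.
    nra.
  - rewrite trunc_pow_ge by lra.
    apply (is_derive_ext_loc (fun t => (t - a) ^ S (S j))).
    + apply (filter_imp (fun t => a < t)); [|exact (open_gt a x Hgt)].
      intros t Ht. rewrite trunc_pow_ge by lra. reflexivity.
    + replace (INR (S (S j)) * (x - a) ^ S j)
        with (INR (S (S j)) * 1 * (x - a) ^ pred (S (S j))) by (simpl pred; ring).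
      apply (is_derive_pow (fun t => t - a)). auto_derive; auto.
Qed.

Lemma locally_open_interval (a b x : R) : a < x < b -> locally x (fun t => a < t < b).
Proof. intros [Hax Hxb]. exact (filter_and _ _ (open_gt a x Hax) (open_lt b x Hxb)). Qed.

Section Witness.
Variables lam eps : R.
Hypothesis eps_gt0 : 0 < eps.

(* [spline 1] is the hat function with knots lam - 6 eps, lam - 5 eps, lam + 2 eps:
   slope 1 up to its peak eps, then slope -1/7 down to 0.  By [is_derive_spline],
   [spline j / j!] is its (j-1)-fold antiderivative vanishing left of the support. *)
Definition spline (j : nat) (x : R) : R :=
  trunc_pow (lam - 6 * eps) j x - 8 / 7 * trunc_pow (lam - 5 * eps) j x
  + 1 / 7 * trunc_pow (lam + 2 * eps) j x.

Lemma spline_left (j : nat) (x : R) : x <= lam - 6 * eps -> spline (S j) x = 0.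
Proof. intro Hx. unfold spline. rewrite !trunc_pow_le by lra. ring. Qed.

Lemma spline1_middle (x : R) : lam - 5 * eps <= x <= lam + 2 * eps ->
  spline 1 x = eps - (x - (lam - 5 * eps)) / 7.
Proof.
  intro Hx. unfold spline.
  rewrite (trunc_pow_ge (lam - 6 * eps)), (trunc_pow_ge (lam - 5 * eps)),
    (trunc_pow_le (lam + 2 * eps)) by lra.
  simpl. field.
Qed.

Lemma spline1_bounds (x : R) : 0 <= spline 1 x <= eps.
Proof.
  destruct (Rle_dec x (lam - 6 * eps)); [rewrite spline_left by lra; lra|].
  destruct (Rle_dec x (lam - 5 * eps)).
  { unfold spline. rewrite (trunc_pow_ge (lam - 6 * eps)), (trunc_pow_le (lam - 5 * eps)),
      (trunc_pow_le (lam + 2 * eps)) by lra. simpl. lra. }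
  destruct (Rle_dec x (lam + 2 * eps)); [rewrite spline1_middle by lra; lra|].
  unfold spline. rewrite !trunc_pow_ge by lra. simpl. lra.
Qed.

Lemma continuous_spline (j : nat) (x : R) : continuous (spline j) x.
Proof.
  assert (Htp : forall a, continuity_pt (trunc_pow a j) x)
    by (intro a; apply continuity_pt_filterlim, continuous_trunc_pow).
  apply continuity_pt_filterlim. unfold spline.
  apply continuity_pt_plus; [apply continuity_pt_minus; [|apply continuity_pt_scal]|
    apply continuity_pt_scal]; apply Htp.
Qed.

Lemma is_derive_spline (j : nat) (x : R) :
  is_derive (spline (S (S j))) x (INR (S (S j)) * spline (S j) x).
Proof.
  set (c := INR (S (S j))).
  replace (c * spline (S j) x) with
    (c * trunc_pow (lam - 6 * eps) (S j) x - 8 / 7 * (c * trunc_pow (lam - 5 * eps) (S j) x)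
     + 1 / 7 * (c * trunc_pow (lam + 2 * eps) (S j) x)) by (unfold spline; ring).
  apply (is_derive_plus (fun t => _ - _) (fun t => 1 / 7 * _)).
  - apply (is_derive_minus _ (fun t => 8 / 7 * _)).
    + apply is_derive_trunc_pow.
    + apply is_derive_scal, is_derive_trunc_pow.
  - apply is_derive_scal, is_derive_trunc_pow.
Qed.

Lemma spline_nonneg (j : nat) (x : R) : 0 <= spline (S j) x.
Proof.
  revert x; induction j as [|j IH]; intro x; [apply spline1_bounds|].
  destruct (Rle_dec x (lam - 6 * eps)); [rewrite spline_left by lra; lra|].
  destruct (MVT_Derive (spline (S (S j))) (lam - 6 * eps) x) as [eta [_ Hmvt]].
  { intro t. eexists. apply is_derive_spline. }
  rewrite (spline_left _ (lam - 6 * eps)), (is_derive_unique _ _ _ (is_derive_spline j eta))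
    in Hmvt by lra.
  assert (0 <= INR (S (S j)) * spline (S j) eta) by (apply Rmult_le_pos; [apply pos_INR|apply IH]).
  nra.
Qed.

Lemma Derive_n_spline (m k : nat) (x : R) : (k < m)%nat ->
  Derive_n (spline m) k x = INR (fact m) / INR (fact (m - k)) * spline (m - k) x.
Proof.
  revert x; induction k as [|k IH]; intros x Hk.
  { rewrite Nat.sub_0_r. simpl. field. apply INR_fact_neq_0. }
  simpl Derive_n. rewrite (Derive_ext _ _ x (fun t => IH t ltac:(lia))), Derive_scal.
  destruct (m - S k)%nat as [|p] eqn:Hp; [lia|].
  replace (m - k)%nat with (S (S p)) by lia.
  rewrite (is_derive_unique _ _ _ (is_derive_spline p x)).
  change (fact (S (S p))) with (S (S p) * fact (S p))%nat. rewrite mult_INR.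
  field. split; [apply INR_fact_neq_0|apply not_0_INR; lia].
Qed.

Lemma ex_derive_n_spline (m k : nat) (x : R) : (k < m)%nat -> ex_derive_n (spline m) k x.
Proof.
  intro Hk. destruct k as [|k]; [exact I|].
  apply (ex_derive_ext (fun t => INR (fact m) / INR (fact (m - k)) * spline (m - k) t)).
  { intro t. symmetry. apply Derive_n_spline. lia. }
  replace (m - k)%nat with (S (S (m - S (S k)))) by lia.
  apply ex_derive_scal. eexists. apply is_derive_spline.
Qed.

Definition witness (r : nat) (x : R) : R := / eps * spline (S r) x.

Lemma witness_nonneg (r : nat) (x : R) : 0 <= witness r x.
Proof. apply Rmult_le_pos; [apply Rlt_le, Rinv_0_lt_compat, eps_gt0|apply spline_nonneg]. Qed.

Lemma witness_left (r : nat) (x : R) : x <= lam - 6 * eps -> witness r x = 0.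
Proof. intro Hx. unfold witness. rewrite spline_left by exact Hx. ring. Qed.

Lemma ex_derive_n_witness (r k : nat) (x : R) : (k <= r)%nat -> ex_derive_n (witness r) k x.
Proof. intro Hk. apply ex_derive_n_scal_l, ex_derive_n_spline. lia. Qed.

Lemma Derive_n_witness (r : nat) (x : R) :
  Derive_n (witness r) r x = INR (fact (S r)) / eps * spline 1 x.
Proof.
  unfold witness. rewrite Derive_n_scal_l, Derive_n_spline by lia.
  replace (S r - r)%nat with 1%nat by lia. rewrite (INR_1 : INR (fact 1) = 1). field. lra.
Qed.

Lemma is_Cr_witness (r : nat) : is_Cr r (witness r).
Proof.
  split; [intros k x; apply ex_derive_n_witness|].
  intro x. apply (continuous_ext (fun t => INR (fact (S r)) / eps * spline 1 t)).
  { intro t. symmetry. apply Derive_n_witness. }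
  apply (continuous_scal_r (INR (fact (S r)) / eps) (spline 1)), continuous_spline.
Qed.

Lemma Derive_n_witness_bound (r : nat) (x : R) :
  Rabs (Derive_n (witness r) r x) <= INR (fact (S r)).
Proof.
  rewrite Derive_n_witness.
  pose proof (spline1_bounds x). pose proof (INR_fact_lt_0 (S r)).
  rewrite Rabs_pos_eq by (apply Rmult_le_pos; [apply Rlt_le, Rdiv_lt_0_compat|]; lra).
  apply (Rmult_le_reg_r eps); [lra|].
  replace (INR (fact (S r)) / eps * spline 1 x * eps) with (INR (fact (S r)) * spline 1 x)
    by (field; lra).
  nra.
Qed.

Lemma is_derive_Derive_n_witness_middle (r : nat) (x : R) :
  lam - 5 * eps < x < lam + 2 * eps ->
  is_derive (Derive_n (witness r) r) x (- INR (fact (S r)) / (7 * eps)).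
Proof.
  intro Hx.
  apply (is_derive_ext_loc (fun t => INR (fact (S r)) / eps * (eps - (t - (lam - 5 * eps)) / 7))).
  - eapply filter_imp; [|apply locally_open_interval, Hx].
    intros t Ht. rewrite Derive_n_witness, spline1_middle by lra. reflexivity.
  - auto_derive; [exact I|]. change (fact r + r * fact r)%nat with (fact (S r)). field. lra.
Qed.

Lemma ex_derive_n_witness_middle (r : nat) (x : R) : lam - 5 * eps < x < lam + 2 * eps ->
  locally x (fun s => forall k, (k <= S r)%nat -> ex_derive_n (witness r) k s).
Proof.
  intro Hx. eapply filter_imp; [|apply locally_open_interval, Hx].
  intros s Hs k Hk. destruct (Nat.eq_dec k (S r)) as [->|Hne].
  - eexists. apply is_derive_Derive_n_witness_middle, Hs.
  - apply ex_derive_n_witness. lia.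
Qed.

Lemma witness_at_probe (r : nat) : witness r (lam - 4 * eps) <= (2 * eps) ^ S r / eps.
Proof.
  unfold witness, spline.
  rewrite (trunc_pow_ge (lam - 6 * eps)), (trunc_pow_ge (lam - 5 * eps)),
    (trunc_pow_le (lam + 2 * eps)) by lra.
  replace (lam - 4 * eps - (lam - 6 * eps)) with (2 * eps) by ring.
  assert (0 <= (lam - 4 * eps - (lam - 5 * eps)) ^ S r) by (apply pow_le; lra).
  unfold Rdiv. rewrite (Rmult_comm _ (/ eps)).
  apply Rmult_le_compat_l; [apply Rlt_le, Rinv_0_lt_compat, eps_gt0|lra].
Qed.

Lemma Derive_n_witness_succ_middle (r : nat) (x : R) : lam - 5 * eps < x < lam + 2 * eps ->
  Derive_n (witness r) (S r) x = - INR (fact (S r)) / (7 * eps).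
Proof. intro Hx. apply is_derive_unique, is_derive_Derive_n_witness_middle, Hx. Qed.

Lemma Taylor_witness_sub (r : nat) (g : R -> R) : smooth g ->
  (forall i, (i <= r)%nat -> Derive_n g i lam = Derive_n (witness r) i lam) ->
  exists z, lam - 4 * eps < z < lam /\
    witness r (lam - 4 * eps) - g (lam - 4 * eps) =
    (- 4 * eps) ^ S r / INR (fact (S r)) *
    (- INR (fact (S r)) / (7 * eps) - Derive_n g (S r) z).
Proof.
  intros Hg Hmatch.
  assert (Hg_loc : forall n t, locally t (fun s => forall k, (k <= n)%nat -> ex_derive_n g k s))
    by (intros n t; apply filter_forall; intros s k _; apply Hg).
  assert (HD : forall k t, (k <= S r)%nat -> lam - 5 * eps < t < lam + 2 * eps ->
            Derive_n (fun x => witness r x - g x) k t = Derive_n (witness r) k t - Derive_n g k t).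
  { intros k t Hk Ht. apply Derive_n_minus; [|apply Hg_loc].
    apply (locally_ex_derive_n_le _ k (S r) t Hk), ex_derive_n_witness_middle, Ht. }
  destruct (Taylor_flat_left (fun x => witness r x - g x) r (lam - 4 * eps) lam)
    as [z [Hz Htaylor]].
  - lra.
  - intros t Ht. apply locally_ex_derive_n_minus; [|apply Hg_loc].
    apply ex_derive_n_witness_middle. lra.
  - intros k Hk. rewrite HD, Hmatch by (lia || lra). ring.
  - exists z. split; [exact Hz|].
    rewrite Htaylor, HD, Derive_n_witness_succ_middle by (lia || lra).
    now replace (lam - 4 * eps - lam) with (- 4 * eps) by ring.
Qed.

Lemma Taylor_witness_gap (r : nat) (g : R -> R) (B : R) : Nat.Even r -> smooth g ->
  (forall i, (i <= r)%nat -> Derive_n g i lam = Derive_n (witness r) i lam) ->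
  (forall z, lam - 4 * eps < z < lam -> Rabs (Derive_n g (S r) z) <= B) ->
  g (lam - 4 * eps) <=
    ((2 * eps) ^ S r - (4 * eps) ^ S r / 7) / eps + (4 * eps) ^ S r / INR (fact (S r)) * B.
Proof.
  intros Heven Hg Hmatch HB.
  destruct (Taylor_witness_sub r g Hg Hmatch) as [z [Hz Htaylor]].
  assert (Hodd : (- 4 * eps) ^ S r = - (4 * eps) ^ S r).
  { destruct Heven as [p ->].
    replace (- 4 * eps) with (-1 * (4 * eps)) by ring.
    rewrite Rpow_mult_distr, pow_1_odd. ring. }
  rewrite Hodd in Htaylor.
  assert (HF : 0 < INR (fact (S r))) by apply INR_fact_lt_0.
  assert (HQ : 0 <= (4 * eps) ^ S r / INR (fact (S r)))
    by (apply Rmult_le_pos; [apply pow_le; lra|apply Rlt_le, Rinv_0_lt_compat, HF]).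
  assert (Hd : - Derive_n g (S r) z <= B)
    by (eapply Rle_trans; [apply Rabs_maj2|apply HB; lra]).
  pose proof (witness_at_probe r).
  replace (- (4 * eps) ^ S r / INR (fact (S r)) *
             (- INR (fact (S r)) / (7 * eps) - Derive_n g (S r) z))
    with ((4 * eps) ^ S r / (7 * eps)
          + (4 * eps) ^ S r / INR (fact (S r)) * Derive_n g (S r) z) in Htaylor by (field; lra).
  replace (((2 * eps) ^ S r - (4 * eps) ^ S r / 7) / eps)
    with ((2 * eps) ^ S r / eps - (4 * eps) ^ S r / (7 * eps)) by (field; lra).
  nra.
Qed.

End Witness.

Lemma Taylor_gap_neg (r : nat) (eps K : R) : (2 <= r)%nat -> 0 < eps -> eps * K < 1 / 56 ->
  ((2 * eps) ^ S r - (4 * eps) ^ S r / 7) / eps + (4 * eps) ^ S r * K < 0.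
Proof.
  intros Hr Heps HK.
  replace (4 * eps) with (2 * (2 * eps)) by ring.
  rewrite (Rpow_mult_distr 2 (2 * eps)).
  set (Y := 2 ^ S r). set (e := (2 * eps) ^ S r).
  assert (HY : 8 <= Y).
  { unfold Y. replace 8 with (2 ^ 3) by ring. apply Rle_pow; [lra|lia]. }
  assert (He : 0 < e / eps) by (apply Rdiv_lt_0_compat; [apply pow_lt|]; lra).
  replace ((e - Y * e / 7) / eps + Y * e * K) with (e / eps * (1 - Y / 7 + Y * (eps * K)))
    by (field; lra).
  assert (Y * (eps * K) < Y / 56) by nra.
  nra.
Qed.

Lemma exists_small_eps (n : nat) (K : R) : (0 < n)%nat -> 0 <= K ->
  exists eps, 0 < eps /\ 13 * eps <= 1 /\ 4 * eps < 1 / INR n /\ eps * K < 1 / 56.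
Proof.
  intros Hn HK.
  assert (HnR : 0 < INR n) by (apply lt_0_INR; lia).
  set (D := 13 + 4 * INR n + 56 * K).
  exists (/ D).
  assert (HD : / D * D = 1) by (apply Rinv_l; unfold D; lra).
  assert (0 < / D) by (apply Rinv_0_lt_compat; unfold D; lra).
  assert (0 <= / D * K) by (apply Rmult_le_pos; lra).
  unfold D in *. split; [|split; [|split]]; try nra.
  apply (Rmult_lt_reg_r (INR n)); [exact HnR|].
  replace (1 / INR n * INR n) with 1 by (field; lra). nra.
Qed.

Lemma sup_norm_le (g : R -> R) (K : R) :
  (forall x, -1 <= x <= 1 -> Rabs (g x) <= K) -> Rbar_le (sup_norm g) K.
Proof.
  intro Hg. apply (proj2 (Lub_Rbar_correct _)).
  intros y [x [Hx ->]]. apply Hg, Hx.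
Qed.

Lemma sup_norm_ge (g : R -> R) (x : R) : -1 <= x <= 1 -> Rbar_le (Rabs (g x)) (sup_norm g).
Proof. intro Hx. apply (proj1 (Lub_Rbar_correct _)). exists x. auto. Qed.

Lemma sup_norm_gt (g h : R -> R) (A K : R) : 0 < A ->
  (forall x, -1 <= x <= 1 -> Rabs (g x) <= K) ->
  ~ (forall x, -1 <= x <= 1 -> Rabs (h x) <= A * K) ->
  Rbar_lt (Rbar_mult A (sup_norm g)) (sup_norm h).
Proof.
  intros HA Hg Hh.
  pose proof (sup_norm_le g K Hg) as Hle.
  pose proof (sup_norm_ge g 0 ltac:(lra)) as Hge.
  pose proof (fun x Hx => sup_norm_ge h x Hx) as Hhge.
  destruct (sup_norm g) as [s| |]; simpl in Hle, Hge; try contradiction.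
  destruct (sup_norm h) as [t| |]; simpl; [|exact I|now apply (Hhge 0); lra].
  apply Rnot_le_lt. intro Hts. apply Hh. intros x Hx.
  specialize (Hhge x Hx). simpl in Hhge. nra.
Qed.

Theorem lemma3p6 (r n : nat) (A lam : R) :
  (2 <= r)%nat -> Nat.Even r -> (r <= n)%nat -> 0 < A -> 0 <= lam <= 1 ->
  exists f : R -> R,
    is_Cr r f /\
    (forall x, -1 <= x <= 1 -> 0 <= f x) /\
    (forall x, -1 <= x <= -1/2 -> f x = 0) /\
    forall c : nat -> R,
      (forall x, lam - 1 / INR n < x < lam -> 0 <= poly_eval c n x) ->
      (forall i, (i <= r)%nat ->
         Derive_n (poly_eval c n) i lam = Derive_n f i lam) ->
      Rbar_lt (Rbar_mult (Finite A) (sup_norm (Derive_n f r)))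
              (sup_norm (fun x => f x - poly_eval c n x)).
Proof.
  intros Hr Heven Hrn HA Hlam.
  destruct (poly_Derive_n_bound n (S r)) as [C [HC Hmarkov]]; [lia|].
  destruct (exists_small_eps n (C * A)) as [eps [Heps [Heps_13 [Heps_n Heps_CA]]]];
    [lia|nra|].
  exists (witness lam eps r).
  split; [apply is_Cr_witness, Heps|]. split; [intros x _; apply witness_nonneg, Heps|].
  split; [intros x Hx; apply witness_left; lra|].
  intros c Hpos Hmatch.
  apply (sup_norm_gt _ _ A (INR (fact (S r))) HA).
  { intros x _. apply Derive_n_witness_bound, Heps. }
  intros Happrox.
  assert (Hleft : forall x, -1 <= x <= -1/2 -> Rabs (poly_eval c n x) <= A * INR (fact (S r))).
  { intros x Hx. rewrite <- Rabs_Ropp, <- (Rminus_0_l (poly_eval c n x)).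
    rewrite <- (witness_left lam eps Heps r x) by lra. apply Happrox. lra. }
  pose proof (Taylor_witness_gap lam eps Heps r (poly_eval c n) (C * (A * INR (fact (S r))))
    Heven (smooth_poly_eval c n) Hmatch
    (fun z Hz => Hmarkov c _ Hleft z ltac:(lra))) as Hgap.
  pose proof (Hpos (lam - 4 * eps) ltac:(lra)).
  pose proof (Taylor_gap_neg r eps (C * A) Hr Heps Heps_CA).
  replace ((4 * eps) ^ S r / INR (fact (S r)) * (C * (A * INR (fact (S r)))))
    with ((4 * eps) ^ S r * (C * A)) in Hgap by (field; apply INR_fact_neq_0).
  lra.
Qed.
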